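(* Let $k\ge 2$ be an integer. Assume that for every integer $d$ with $2\le d\le k$, every $\mathcal{T}\in\mathrm{Sym}(2,d)$ has a symmetric best rank one approximation. Then for every integer $n\ge 3$ and every integer $d$ with $2\le d\le k$, every $\mathcal{T}\in\mathrm{Sym}(n,d)$ has a symmetric best rank one approximation.
   Context: $\mathrm{Sym}(n,d)$ is the space of real tensors $[t_{i_1,\ldots,i_d}]_{i_1,\ldots,i_d=1}^n$ invariant under all permutations of indices. Norm $\|\mathcal{T}\|=\sqrt{\sum t_{i_1,\ldots,i_d}^2}$; $\mathrm{S}^{n-1}$ is the Euclidean unit sphere in $\mathbb{R}^n$. A best rank one approximation of $\mathcal{T}$ is a tensor $a\,\mathbf{u}_1\otimes\cdots\otimes\mathbf{u}_d$ ($a\in\mathbb{R}$, $\mathbf{u}_j\in\mathrm{S}^{n-1}$) minimizing $\|\mathcal{T}-s\,\mathbf{x}_1\otimes\cdots\otimes\mathbf{x}_d\|$ over $s\in\mathbb{R}$, $\mathbf{x}_j\in\mathrm{S}^{n-1}$; it is symmetric if it is of the form $b\,\mathbf{u}\otimes\cdots\otimes\mathbf{u}$. *)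

From HB Require Import structures.
From mathcomp Require Import all_boot all_order all_algebra all_fingroup.
From mathcomp Require Import reals.
Set Implicit Arguments. Unset Strict Implicit. Unset Printing Implicit Defensive.
Import Order.TTheory GRing.Theory Num.Theory.
Local Open Scope ring_scope.

Definition midx (n d : nat) := {ffun 'I_d -> 'I_n}.

Definition tensor (R : realType) (n d : nat) := midx n d -> R.

Definition symmetric_tensor (R : realType) (n d : nat) (T : tensor R n d) : Prop :=
  forall (s : 'S_d) (i : midx n d), T [ffun j => i (s j)] = T i.

Definition tnorm (R : realType) (n d : nat) (T : tensor R n d) : R :=
  Num.sqrt (\sum_(i : midx n d) T i ^+ 2).

Definition unit_vec (R : realType) (n : nat) (u : 'I_n -> R) : Prop :=
  \sum_(i < n) u i ^+ 2 = 1.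

Definition rank_one (R : realType) (n d : nat) (s : R) (x : 'I_d -> 'I_n -> R)
  : tensor R n d :=
  fun i => s * \prod_(j < d) x j (i j).

Definition tsub (R : realType) (n d : nat) (T U : tensor R n d) : tensor R n d :=
  fun i => T i - U i.

Definition best_rank_one (R : realType) (n d : nat) (T : tensor R n d)
  (a : R) (u : 'I_d -> 'I_n -> R) : Prop :=
  (forall j, unit_vec (u j)) /\
  forall (s : R) (x : 'I_d -> 'I_n -> R), (forall j, unit_vec (x j)) ->
    tnorm (tsub T (rank_one a u)) <= tnorm (tsub T (rank_one s x)).

Definition has_sym_best_rank_one (R : realType) (n d : nat) (T : tensor R n d) : Prop :=
  exists (b : R) (u : 'I_n -> R), best_rank_one T b (fun _ => u).

(* Write f_T(x_1, ..., x_d) for the contraction of T with x_1 (x) ... (x) x_d.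
   For unit vectors x_j one has ||T - s x_1 (x) ... (x) x_d||^2 =
   ||T||^2 - f_T(x)^2 + (s - f_T(x))^2, so best rank one approximations are
   exactly the maximizers x of f_T(x)^2 (with s = f_T(x)), and it suffices to
   find a unit u with f_T(u, ..., u)^2 >= f_T(x)^2 for all unit x_1, ..., x_d.
   A unit u maximizing f_T(u, ..., u)^2 exists by compactness of the sphere, so
   we only need, for every unit x, some unit w with f_T(w, ..., w)^2 >= f_T(x)^2.
   The arguments are merged one at a time: if x_1 = ... = x_{m+1} = w, write
   x_{m+2} = a w + b e with (w, e) orthonormal.  Restricting T in its first m+2
   slots to span(w, e) and contracting the other slots with x_{m+3}, ..., x_d
   gives a tensor in Sym(2, m+2); its symmetric best rank one approximation
   y (x) ... (x) y beats (1,0) (x) ... (x) (1,0) (x) (a,b), so the unit vector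
   y_1 w + y_2 e can replace the first m+2 arguments. *)

From mathcomp Require Import all_boot all_order all_algebra all_fingroup reals.
From mathcomp Require Import ring lra.
From mathcomp Require Import all_classical all_reals all_analysis.
Set Implicit Arguments. Unset Strict Implicit. Unset Printing Implicit Defensive.
Import Order.TTheory GRing.Theory Num.Theory numFieldNormedType.Exports.
Local Open Scope classical_set_scope.
Local Open Scope ring_scope.

Section SymmetricBestRankOne.
Variable R : realType.

Definition tform (n d : nat) (T : tensor R n d) (x : 'I_d -> 'I_n -> R) : R :=
  \sum_(i : midx n d) T i * \prod_(j < d) x j (i j).

Lemma tform_ext (n d : nat) (T : tensor R n d) (x y : 'I_d -> 'I_n -> R) :
  (forall j k, x j k = y j k) -> tform T x = tform T y.
Proof.
move=> exy; apply: eq_bigr => i _; congr (_ * _).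
by apply: eq_bigr => j _; rewrite exy.
Qed.

Lemma sum_prod_sqr (n d : nat) (x : 'I_d -> 'I_n -> R) :
  \sum_(i : midx n d) (\prod_(j < d) x j (i j)) ^+ 2 =
  \prod_(j < d) \sum_(k < n) x j k ^+ 2.
Proof. by rewrite bigA_distr_bigA /=; apply: eq_bigr => i _; rewrite -prodrXl. Qed.

Lemma sqr_dist_rank_one (n d : nat) (T : tensor R n d) s
    (x : 'I_d -> 'I_n -> R) :
  (forall j, unit_vec (x j)) ->
  \sum_(i : midx n d) tsub T (rank_one s x) i ^+ 2 =
  \sum_(i : midx n d) T i ^+ 2 - tform T x ^+ 2 + (s - tform T x) ^+ 2.
Proof.
move=> ux.
have sum_x2 : \prod_(j < d) \sum_(k < n) x j k ^+ 2 = 1.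
  by rewrite big1 // => j _; apply: ux.
transitivity (\sum_(i : midx n d) (T i ^+ 2
   - 2 * s * (T i * \prod_(j < d) x j (i j))
   + s ^+ 2 * (\prod_(j < d) x j (i j)) ^+ 2)).
  by apply: eq_bigr => i _; rewrite /tsub /rank_one; ring.
rewrite big_split /= sumrB -!mulr_sumr sum_prod_sqr sum_x2 -/(tform T x).
ring.
Qed.

Lemma tnorm_dist_rank_one_le (n d : nat) (T : tensor R n d) s t
    (x y : 'I_d -> 'I_n -> R) :
  (forall j, unit_vec (x j)) -> (forall j, unit_vec (y j)) ->
  (tnorm (tsub T (rank_one s x)) <= tnorm (tsub T (rank_one t y))) =
  ((s - tform T x) ^+ 2 - tform T x ^+ 2 <= (t - tform T y) ^+ 2 - tform T y ^+ 2).
Proof.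
move=> ux uy; rewrite /tnorm ler_sqrt; last first.
  by apply: sumr_ge0 => i _; rewrite sqr_ge0.
by rewrite !sqr_dist_rank_one // -!addrA lerD2l !(addrC (- _ ^+ 2)).
Qed.

Lemma best_rank_one_tform_max (n d : nat) (T : tensor R n d) b
    (y : 'I_d -> 'I_n -> R) :
  best_rank_one T b y ->
  forall x, (forall j, unit_vec (x j)) -> tform T x ^+ 2 <= tform T y ^+ 2.
Proof.
move=> [uy best] x ux; have := best (tform T x) x ux.
rewrite tnorm_dist_rank_one_le // subrr expr0n /= add0r.
have := sqr_ge0 (b - tform T y); lra.
Qed.

Lemma tform_diag_max_sym_best (n d : nat) (T : tensor R n d) (u : 'I_n -> R) :
  unit_vec u ->
  (forall x, (forall j, unit_vec (x j)) ->
     tform T x ^+ 2 <= tform T (fun _ => u) ^+ 2) ->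
  has_sym_best_rank_one T.
Proof.
move=> uu umax; exists (tform T (fun _ => u)), u; split => // s x ux.
rewrite tnorm_dist_rank_one_le // subrr expr0n /= add0r.
have := umax x ux; have := sqr_ge0 (s - tform T x); lra.
Qed.

Lemma tform_perm (n d : nat) (T : tensor R n d) (s : 'S_d) x :
  symmetric_tensor T -> tform T (fun j => x (s j)) = tform T x.
Proof.
move=> symT; pose h (i : midx n d) : midx n d := [ffun j => i ((s^-1)%g j)].
have h_inj : injective h.
  move=> i1 i2 /ffunP e; apply/ffunP => j.
  by have := e (s j); rewrite !ffunE permK.
rewrite [RHS](reindex_inj h_inj); apply: eq_bigr => i _; congr (_ * _).
  rewrite -(symT s (h i)); congr (T _); apply/ffunP => j.
  by rewrite !ffunE permK.
rewrite (reindex_inj (@perm_inj _ (s^-1)%g)) /=.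
by apply: eq_bigr => j _; rewrite permKV ffunE.
Qed.

Definition splice (n d m : nat) (F : 'I_m.+1 -> 'I_n -> R)
    (x : 'I_d -> 'I_n -> R) : 'I_d -> 'I_n -> R :=
  fun j => if (j < m.+1)%N then F (inord j) else x j.

Lemma prod_splice (n d m : nat) (le_md : (m.+1 <= d)%N)
    (F : 'I_m.+1 -> 'I_n -> R) x (i : midx n d) :
  \prod_(j < d) splice F x j (i j) =
  \prod_(j < m.+1) F j (i (widen_ord le_md j)) *
  \prod_(j < d | ~~ (j < m.+1)%N) x j (i j).
Proof.
rewrite (bigID (fun j : 'I_d => (j < m.+1)%N)) /=; congr (_ * _).
  rewrite (big_ord_narrow le_md); apply: eq_bigr => j _.
  rewrite /splice /= ltn_ord; congr (F _ _).
  by apply: val_inj; rewrite /= inordK.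
by apply: eq_bigr => j /negbTE notj; rewrite /splice notj.
Qed.

Lemma exists_perm_prefix (d m : nat) (le_md : (m.+1 <= d)%N) (s : 'S_m.+1) :
  exists s' : 'S_d, forall j,
    s' j = if (j < m.+1)%N then widen_ord le_md (s (inord j)) else j.
Proof.
pose f (j : 'I_d) := if (j < m.+1)%N then widen_ord le_md (s (inord j)) else j.
suff f_inj : injective f by exists (perm f_inj) => j; rewrite permE.
move=> j1 j2; rewrite /f.
case: (ltnP j1 m.+1) => lt1; case: (ltnP j2 m.+1) => lt2.
- move/(congr1 val) => /= /val_inj /perm_inj /(congr1 val).
  by rewrite /= !inordK // => /val_inj.
- by move=> e; move: lt2; rewrite -e /= leqNgt ltn_ord.
- by move=> e; move: lt1; rewrite e /= leqNgt ltn_ord.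
- by [].
Qed.

Definition frame_vec (n : nat) (e : 'I_2 -> 'I_n -> R) (y : 'I_2 -> R) :
  'I_n -> R := fun k => \sum_(a < 2) y a * e a k.

Section Restriction.
Variables (n d m : nat) (le_md : (m.+1 <= d)%N) (e : 'I_2 -> 'I_n -> R).
Variables (x : 'I_d -> 'I_n -> R) (T : tensor R n d).

Definition restr_tensor : tensor R 2 m.+1 :=
  fun i2 => tform T (splice (fun j => e (i2 j)) x).

Lemma tform_restr_tensor (Y : 'I_m.+1 -> 'I_2 -> R) :
  tform restr_tensor Y = tform T (splice (fun j => frame_vec e (Y j)) x).
Proof.
rewrite /restr_tensor /tform.
under eq_bigr do rewrite mulr_suml.
rewrite exchange_big /=; apply: eq_bigr => i _.
rewrite prod_splice; under eq_bigr do rewrite prod_splice.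
have expand_frame : \prod_(j < m.+1) frame_vec e (Y j) (i (widen_ord le_md j)) =
    \sum_(i2 : midx 2 m.+1) \prod_(j < m.+1) Y j (i2 j) *
                            \prod_(j < m.+1) e (i2 j) (i (widen_ord le_md j)).
  rewrite /frame_vec bigA_distr_bigA /=; apply: eq_bigr => i2 _.
  by rewrite -big_split.
rewrite expand_frame mulr_suml mulr_sumr; apply: eq_bigr => i2 _; ring.
Qed.

Lemma restr_tensor_sym : symmetric_tensor T -> symmetric_tensor restr_tensor.
Proof.
move=> symT s i2; have [s' s'E] := exists_perm_prefix le_md s.
rewrite /restr_tensor -[RHS](tform_perm s' _ symT); apply: tform_ext => j k.
rewrite s'E /splice; case: ifP => ltj; last by rewrite ltj.
rewrite /= ltn_ord ffunE; congr (e (i2 _) k).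
by apply: val_inj; rewrite /= inordK.
Qed.

End Restriction.

Definition dot (n : nat) (a b : 'I_n -> R) : R := \sum_(k < n) a k * b k.

Lemma sum_ord2 (F : 'I_2 -> R) : \sum_(a < 2) F a = F 0 + F 1.
Proof. by rewrite big_ord_recl big_ord1; congr (F _ + F _); apply: val_inj. Qed.

Lemma unit_frame_vec (n : nat) (e : 'I_2 -> 'I_n -> R) (y : 'I_2 -> R) :
  unit_vec (e 0) -> unit_vec (e 1) -> dot (e 0) (e 1) = 0 ->
  unit_vec y -> unit_vec (frame_vec e y).
Proof.
rewrite /unit_vec /frame_vec /dot => ue0 ue1 orth uy.
under eq_bigr do rewrite sum_ord2.
rewrite sum_ord2 in uy.
transitivity (y 0 ^+ 2 * \sum_(k < n) e 0 k ^+ 2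
   + 2 * y 0 * y 1 * \sum_(k < n) e 0 k * e 1 k
   + y 1 ^+ 2 * \sum_(k < n) e 1 k ^+ 2).
  by rewrite !mulr_sumr -!big_split /=; apply: eq_bigr => k _; ring.
by rewrite ue0 ue1 orth; lra.
Qed.

Lemma sum_sqr_sub_proj (n : nat) (w v : 'I_n -> R) :
  unit_vec w -> unit_vec v ->
  \sum_(k < n) (v k - dot v w * w k) ^+ 2 = 1 - dot v w ^+ 2.
Proof.
rewrite /unit_vec => uw uv.
transitivity (\sum_(k < n) (v k ^+ 2 - 2 * dot v w * (v k * w k)
                            + dot v w ^+ 2 * w k ^+ 2)).
  by apply: eq_bigr => k _; ring.
by rewrite big_split /= sumrB -!mulr_sumr uv uw -/(dot v w); ring.
Qed.

Lemma orthonormal_complement (n : nat) (w v : 'I_n -> R) :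
  unit_vec w -> unit_vec v -> dot v w ^+ 2 < 1 ->
  exists e : 'I_n -> R, [/\ unit_vec e, dot w e = 0 &
    forall k, v k = dot v w * w k + Num.sqrt (1 - dot v w ^+ 2) * e k].
Proof.
move=> uw uv lt_c1; set c := dot v w; set t := Num.sqrt (1 - c ^+ 2).
have t_gt0 : 0 < t by rewrite sqrtr_gt0 subr_gt0.
have t2 : t ^+ 2 = 1 - c ^+ 2 by rewrite sqr_sqrtr // subr_ge0 ltW.
have t_neq0 : t != 0 by rewrite gt_eqF.
exists (fun k => (v k - c * w k) / t); split.
- rewrite /unit_vec; under eq_bigr do rewrite expr_div_n.
  by rewrite -mulr_suml sum_sqr_sub_proj // -/c -t2 divff // sqrf_eq0.
- transitivity ((\sum_(k < n) v k * w k - c * \sum_(k < n) w k ^+ 2) / t).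
    by rewrite mulr_sumr -sumrB mulr_suml; apply: eq_bigr => k _; field.
  by rewrite uw mulr1 -/(dot v w) -/c subrr mul0r.
- by move=> k; field.
Qed.

Lemma exists_unit_orthogonal (n : nat) (w : 'I_n -> R) :
  (2 <= n)%N -> unit_vec w -> exists e, unit_vec e /\ dot w e = 0.
Proof.
move=> n2 uw.
have [k0 lt_wk0] : exists k0, w k0 ^+ 2 < 1.
  apply/existsP; apply: contraT => /existsPn all_ge1.
  have : (n%:R : R) <= \sum_(k < n) w k ^+ 2.
    rewrite -[n in n%:R](card_ord n) -sumr_const.
    by apply: ler_sum => k _; rewrite leNgt all_ge1.
  rewrite uw; have : (2%:R : R) <= n%:R by rewrite ler_nat.
  lra.
pose v : 'I_n -> R := fun k => (k == k0)%:R.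
have uv : unit_vec v.
  rewrite /unit_vec (bigD1 k0) //= big1 /v ?eqxx ?expr1n ?addr0 // => k.
  by move/negbTE => ->; rewrite expr0n.
have dot_vw : dot v w = w k0.
  rewrite /dot (bigD1 k0) //= big1 /v ?eqxx ?mul1r ?addr0 // => k.
  by move/negbTE => ->; rewrite mul0r.
have [|e [ue orth _]] := orthonormal_complement uw uv; first by rewrite dot_vw.
by exists e.
Qed.

Lemma unit_decomp (n : nat) (w v : 'I_n -> R) :
  (2 <= n)%N -> unit_vec w -> unit_vec v ->
  exists (e : 'I_n -> R) (a b : R),
    [/\ unit_vec e, dot w e = 0, a ^+ 2 + b ^+ 2 = 1 &
        forall k, v k = a * w k + b * e k].
Proof.
move=> n2 uw uv; have [lt_c1|ge_c1] := ltP (dot v w ^+ 2) 1.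
  have [e [ue orth vE]] := orthonormal_complement uw uv lt_c1.
  exists e, (dot v w), (Num.sqrt (1 - dot v w ^+ 2)); split => //.
  by rewrite sqr_sqrtr ?subr_ge0 ?ltW //; ring.
have [e [ue orth]] := exists_unit_orthogonal n2 uw.
have c2 : dot v w ^+ 2 = 1.
  apply/eqP; rewrite eq_le ge_c1 andbT -subr_ge0 -(sum_sqr_sub_proj uw uv).
  by apply: sumr_ge0 => k _; rewrite sqr_ge0.
have res0 : \sum_(k < n) (v k - dot v w * w k) ^+ 2 = 0.
  by rewrite sum_sqr_sub_proj // c2 subrr.
exists e, (dot v w), 0; split => //; first by rewrite c2 expr0n addr0.
move=> k; rewrite mul0r addr0; apply/eqP; rewrite -subr_eq0 -sqrf_eq0.
by move/psumr_eq0P: res0 => -> // i _; rewrite sqr_ge0.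
Qed.

Definition pair2 (A : Type) (a b : A) : 'I_2 -> A :=
  fun i => if (i : nat) == 0%N then a else b.

Lemma unit_pair2 (a b : R) : a ^+ 2 + b ^+ 2 = 1 -> unit_vec (pair2 a b).
Proof. by rewrite /unit_vec sum_ord2. Qed.

Lemma frame_vec_pair2 (n : nat) (w e : 'I_n -> R) (a b : R) k :
  frame_vec (pair2 w e) (pair2 a b) k = a * w k + b * e k.
Proof. by rewrite /frame_vec sum_ord2. Qed.

Section Merge.
Variables (n d : nat) (T : tensor R n d).
Hypothesis n_ge2 : (2 <= n)%N.
Hypothesis symT : symmetric_tensor T.
Hypothesis sym_best2 : forall d', (2 <= d' <= d)%N ->
  forall T' : tensor R 2 d', symmetric_tensor T' -> has_sym_best_rank_one T'.

Lemma merge_step (x : 'I_d -> 'I_n -> R) (m : nat) (lt_md : (m.+1 < d)%N)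
    (w : 'I_n -> R) :
  unit_vec w -> unit_vec (x (Ordinal lt_md)) ->
  exists2 w', unit_vec w' &
    tform T (splice (fun _ : 'I_m.+1 => w) x) ^+ 2 <=
    tform T (splice (fun _ : 'I_m.+2 => w') x) ^+ 2.
Proof.
move=> uw uv.
have [e [a [b [ue orth ab vE]]]] := unit_decomp n_ge2 uw uv.
pose T2 := @restr_tensor n d m.+1 (pair2 w e) x T.
have [c [y [uy best]]] :
    has_sym_best_rank_one T2 by apply/sym_best2/restr_tensor_sym.
have ymax := best_rank_one_tform_max (conj uy best).
pose Z (j : 'I_m.+2) := if (j < m.+1)%N then pair2 1 0 else pair2 a b.
have uZ : forall j, unit_vec (Z j).
  by move=> j; rewrite /Z; case: ifP => _; apply: unit_pair2; lra.
have := ymax Z uZ; rewrite !(tform_restr_tensor lt_md).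
have -> : tform T (splice (fun j => frame_vec (pair2 w e) (Z j)) x) =
          tform T (splice (fun _ : 'I_m.+1 => w) x).
  apply: tform_ext => j k; rewrite /splice /Z.
  case: (ltnP j m.+1) => ltj.
    by rewrite (leqW ltj) inordK ?(leqW ltj) // ltj frame_vec_pair2 mul1r mul0r addr0.
  case: (ltnP j m.+2) => ltj2 //.
  have -> : j = Ordinal lt_md.
    by apply: val_inj; apply/eqP; rewrite /= eqn_leq ltj andbT; exact: ltj2.
  by rewrite inordK //= ltnn frame_vec_pair2 vE.
move=> le_merged; exists (frame_vec (pair2 w e) y) => //.
by apply: unit_frame_vec => //; apply: uy ord0.
Qed.

Lemma merge_prefix (x : 'I_d -> 'I_n -> R) :
  (forall j, unit_vec (x j)) ->
  forall m, (m < d)%N -> exists2 w, unit_vec w &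
    tform T x ^+ 2 <= tform T (splice (fun _ : 'I_m.+1 => w) x) ^+ 2.
Proof.
move=> ux; elim=> [|m IHm] lt_md.
  exists (x (Ordinal lt_md)) => //; rewrite le_eqVlt; apply/orP; left.
  apply/eqP; congr (_ ^+ 2); apply: tform_ext => j k; rewrite /splice.
  by case: ifP => // /[!ltnS] /[!leqn0] /eqP j0; congr (x _ k); apply: val_inj.
have [w uw le_w] := IHm (ltnW lt_md).
have [w' uw' le_w'] := merge_step uw (ux (Ordinal lt_md)).
by exists w' => //; apply: le_trans le_w le_w'.
Qed.

End Merge.

Lemma compact_unit_sphere (n : nat) :
  compact [set v : 'rV[R]_n | \sum_(k < n) v ord0 k ^+ 2 = 1].
Proof.
pose sq (v : 'rV[R]_n) := \sum_(k < n) v ord0 k ^+ 2.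
have sq_cont : continuous sq.
  apply: continuous_big => [|k _]; first exact: add_continuous.
  under eq_fun do rewrite expr2.
  by move=> v; apply: continuousM; exact: coord_continuous.
apply: (@subclosed_compact _ _
  [set v : 'rV[R]_n | forall i, `[(-1 : R), 1]%classic (v ord0 i)]).
- exact: ((continuous_closedP sq).1 sq_cont _ (closed_eq (y := 1))).
- exact: (rV_compact (fun _ => @segment_compact R _ _)).
- move=> v /= v_unit i; rewrite in_itv /=.
  have : v ord0 i ^+ 2 <= 1.
    by rewrite -v_unit (bigD1 i) //= lerDl sumr_ge0 // => k _; rewrite sqr_ge0.
  by move=> le1; apply/andP; split; nra.
Qed.

Lemma exists_tform_diag_max (n d : nat) (T : tensor R n d) : (0 < n)%N ->
  exists2 u, unit_vec u & forall w, unit_vec w ->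
    tform T (fun _ => w) ^+ 2 <= tform T (fun _ => u) ^+ 2.
Proof.
move=> n_gt0; pose g (v : 'rV[R]_n) := tform T (fun _ k => v ord0 k) ^+ 2.
have g_cont : continuous g.
  move=> v; rewrite /g; under eq_fun do rewrite expr2.
  have f_cont : continuous (fun v : 'rV[R]_n => tform T (fun _ k => v ord0 k)).
    apply: continuous_big => [|i _]; first exact: add_continuous.
    move=> v'; apply: continuousM; first exact: cst_continuous.
    apply: continuous_big => [|j _]; first exact: mul_continuous.
    exact: coord_continuous.
  by apply: continuousM; exact: f_cont.
pose e0 := \row_k ((k == Ordinal n_gt0)%:R : R).
have e0_unit : \sum_(k < n) e0 ord0 k ^+ 2 = 1.
  rewrite (bigD1 (Ordinal n_gt0)) //= big1 ?mxE ?eqxx ?expr1n ?addr0 // => k.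
  by rewrite mxE => /negbTE ->; rewrite expr0n.
have [c] := EVT_max_rV (ex_intro _ e0 e0_unit) (@compact_unit_sphere n)
  (continuous_subspaceT g_cont).
rewrite inE => c_unit c_max; exists (fun k => c ord0 k) => // w uw.
have row_w : \row_k w k \in [set v : 'rV[R]_n | \sum_(k < n) v ord0 k ^+ 2 = 1].
  by rewrite inE /=; under eq_bigr do rewrite mxE.
have := c_max _ row_w; rewrite /g.
by rewrite (@tform_ext _ _ T _ (fun _ => w)) // => j k; rewrite mxE.
Qed.

End SymmetricBestRankOne.

Theorem lemma3p7 (R : realType) (k : nat) (hk : (2 <= k)%N) :
  (forall d : nat, (2 <= d <= k)%N ->
     forall T : tensor R 2 d, symmetric_tensor T -> has_sym_best_rank_one T) ->
  forall n d : nat, (3 <= n)%N -> (2 <= d <= k)%N ->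
  forall T : tensor R n d, symmetric_tensor T -> has_sym_best_rank_one T.
Proof.
move=> sym_best2 n d n_ge3 /andP[d_ge2 le_dk] T symT.
have n_ge2 : (2 <= n)%N by apply: ltnW.
have [u uu umax] := exists_tform_diag_max T (ltnW n_ge2).
apply: (tform_diag_max_sym_best uu) => x ux.
have sym_best2_d : forall d', (2 <= d' <= d)%N -> forall T' : tensor R 2 d',
    symmetric_tensor T' -> has_sym_best_rank_one T'.
  by move=> d' /andP[d'_ge2 le_d'd]; apply: sym_best2; rewrite d'_ge2 (leq_trans le_d'd).
have lt_d1d : (d.-1 < d)%N by rewrite prednK // ltnW.
have [w uw le_w] := merge_prefix n_ge2 symT sym_best2_d ux lt_d1d.
apply: (le_trans le_w); rewrite (tform_ext T (y := fun _ => w)) ?umax //.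
by move=> j kk; rewrite /splice prednK ?ltn_ord // ltnW.
Qed.
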